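(* Let $n\ge1$, $\phi^{\mathrm{imp}}\in\mathbb R^{n\times n}$ and $g\in\mathbb R^{n\times n}$ be arbitrary, and define $\phi^+,\phi,g^+,g^{\mathrm{imp}}$ by the projection and gradient processing oracles in the context. Then $\phi\in\mathcal S(n)$ and for every $\phi^*\in\mathcal S(n)$, $$\langle g,\phi-\phi^*\rangle\le\langle g^{\mathrm{imp}},\phi^{\mathrm{imp}}-\phi^*\rangle.$$
   Context: $\mathcal S(n)$ is the set of $n\times n$ right stochastic matrices; matrix inner product $\langle x,y\rangle=\sum_{i,j}x_{i,j}y_{i,j}$; subscript $i$ on a matrix denotes its $i$-th row, and $\mathbf 1$ is the all-ones vector. Projection oracle: $\phi^+_{i,j}=\max\{\phi^{\mathrm{imp}}_{i,j},0\}$; then $\phi_i=\phi^+_i/\|\phi^+_i\|_1$ if $\|\phi^+_i\|_1>0$ and $\phi_i=(1/n,\dots,1/n)$ otherwise. Gradient processing oracle: $g^+_i=g_i-\langle g_i,\phi_i\rangle\mathbf 1$ for each row $i$; then $g^{\mathrm{imp}}_{i,j}=g^+_{i,j}$ if $\phi^{\mathrm{imp}}_{i,j}\ge0$ (equivalently $\phi^+_{i,j}=\phi^{\mathrm{imp}}_{i,j}$), and $g^{\mathrm{imp}}_{i,j}=\min\{g^+_{i,j},0\}$ otherwise. *)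

From mathcomp Require Import all_boot all_order all_algebra.
Set Implicit Arguments. Unset Strict Implicit. Unset Printing Implicit Defensive.
Import Order.TTheory GRing.Theory Num.Theory.
Local Open Scope ring_scope.

Section Defs.
Variables (R : realFieldType) (n : nat).

Definition mx_inner (x y : 'M[R]_n) : R := \sum_(i < n) \sum_(j < n) x i j * y i j.

Definition row_inner (x y : 'M[R]_n) (i : 'I_n) : R := \sum_(j < n) x i j * y i j.

Definition right_stochastic (x : 'M[R]_n) : Prop :=
  (forall i j, 0 <= x i j) /\ (forall i, \sum_(j < n) x i j = 1).

Definition phi_plus (phi_imp : 'M[R]_n) : 'M[R]_n :=
  \matrix_(i, j) Num.max (phi_imp i j) 0.

Definition proj_oracle (phi_imp : 'M[R]_n) : 'M[R]_n :=
  \matrix_(i, j)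
    let s := \sum_(k < n) `|phi_plus phi_imp i k| in
    if 0 < s then phi_plus phi_imp i j / s else n%:R^-1.

Definition g_plus (phi_imp g : 'M[R]_n) : 'M[R]_n :=
  \matrix_(i, j) (g i j - row_inner g (proj_oracle phi_imp) i).

Definition grad_oracle (phi_imp g : 'M[R]_n) : 'M[R]_n :=
  \matrix_(i, j)
    if 0 <= phi_imp i j then g_plus phi_imp g i j
    else Num.min (g_plus phi_imp g i j) 0.

End Defs.

From mathcomp Require Import all_boot all_order all_algebra.
From mathcomp Require Import lra.
Import Order.TTheory GRing.Theory Num.Theory.
Local Open Scope ring_scope.

(* Row by row: phi^+_i = s_i phi_i with s_i the mass of phi^+_i, so the centred gradient
   g^+_i is orthogonal to phi^+_i.  As phi_i and phi*_i both sum to 1, the left-hand side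
   of a row equals <g^+_i, phi^+_i - phi*_i>, which is compared entrywise with
   <g^imp_i, phi^imp_i - phi*_i>: on entries where phi^imp is negative, phi^+ vanishes
   and clipping g^+ at 0 only increases the right-hand side since phi* >= 0. *)

Lemma clipped_grad_entry_le (R : realFieldType) (a x q : R) : 0 <= q ->
  x * Num.max a 0 - x * q <= (if 0 <= a then x else Num.min x 0) * (a - q).
Proof.
move=> q_ge0; case: ifP => [a_ge0|].
  by rewrite max_l // mulrBr.
move/negbT; rewrite -ltNge => a_lt0.
rewrite (max_r (ltW a_lt0)) mulr0 sub0r.
by have [x_le0|x_gt0] := leP x 0; nra.
Qed.

Section Oracles.
Variables (R : realFieldType) (n : nat) (phi_imp g : 'M[R]_n).

Let mass (i : 'I_n) : R := \sum_(k < n) phi_plus phi_imp i k.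

Lemma phi_plus_ge0 i j : 0 <= phi_plus phi_imp i j.
Proof. by rewrite mxE le_max lexx orbT. Qed.

Lemma proj_oracleE i j :
  proj_oracle phi_imp i j =
  if 0 < mass i then phi_plus phi_imp i j / mass i else n%:R^-1.
Proof.
rewrite mxE /=; congr (if 0 < _ then _ / _ else _);
  by apply: eq_bigr => k _; rewrite ger0_norm ?phi_plus_ge0.
Qed.

Lemma phi_plus_mass_proj i j :
  phi_plus phi_imp i j = mass i * proj_oracle phi_imp i j.
Proof.
rewrite proj_oracleE; have [mass_gt0|mass_le0] := ltP 0 (mass i).
  by rewrite mulrC divfK ?gt_eqF.
have mass0 : mass i = 0 by apply/eqP; rewrite eq_le mass_le0 sumr_ge0 // => k _;
  exact: phi_plus_ge0.
rewrite mass0 mul0r.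
by move/psumr_eq0P: mass0 => -> // k _; exact: phi_plus_ge0.
Qed.

Lemma proj_oracle_ge0 i j : 0 <= proj_oracle phi_imp i j.
Proof.
rewrite proj_oracleE; case: ifP => [mass_gt0|_].
  exact: divr_ge0 (phi_plus_ge0 i j) (ltW mass_gt0).
by rewrite invr_ge0 ler0n.
Qed.

Lemma proj_oracle_sum1 i : (0 < n)%N -> \sum_(j < n) proj_oracle phi_imp i j = 1.
Proof.
move=> n_gt0; have [mass_gt0|mass_le0] := ltP 0 (mass i).
  under eq_bigr do rewrite proj_oracleE mass_gt0.
  by rewrite -mulr_suml mulfV ?gt_eqF.
under eq_bigr do rewrite proj_oracleE ltNge mass_le0 /=.
by rewrite sumr_const card_ord -[_ *+ n]mulr_natr mulVf // pnatr_eq0 -lt0n.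
Qed.

Lemma sum_g_plus_mul i (q : 'I_n -> R) :
  \sum_(j < n) g_plus phi_imp g i j * q j =
  \sum_(j < n) g i j * q j - row_inner g (proj_oracle phi_imp) i * \sum_(j < n) q j.
Proof. by rewrite mulr_sumr -sumrB; apply: eq_bigr => j _; rewrite mxE mulrBl. Qed.

Lemma g_plus_orthogonal_phi_plus i : (0 < n)%N ->
  \sum_(j < n) g_plus phi_imp g i j * phi_plus phi_imp i j = 0.
Proof.
move=> n_gt0; under eq_bigr do rewrite phi_plus_mass_proj mulrCA.
rewrite -mulr_sumr sum_g_plus_mul proj_oracle_sum1 //.
by rewrite /row_inner mulr1 subrr mulr0.
Qed.

Lemma row_oracle_le i (q : 'I_n -> R) : (0 < n)%N ->
  (forall j, 0 <= q j) -> \sum_(j < n) q j = 1 ->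
  \sum_(j < n) g i j * (proj_oracle phi_imp i j - q j) <=
  \sum_(j < n) grad_oracle phi_imp g i j * (phi_imp i j - q j).
Proof.
move=> n_gt0 q_ge0 q_sum1.
have -> : \sum_(j < n) g i j * (proj_oracle phi_imp i j - q j) =
    \sum_(j < n) (g_plus phi_imp g i j * phi_plus phi_imp i j
                  - g_plus phi_imp g i j * q j).
  rewrite [RHS]sumrB g_plus_orthogonal_phi_plus // sub0r sum_g_plus_mul q_sum1.
  by rewrite mulr1 opprB -sumrB; apply: eq_bigr => j _; rewrite mulrBr.
apply: ler_sum => j _; rewrite [phi_plus _ _ _]mxE [grad_oracle _ _ _ _]mxE.
exact: clipped_grad_entry_le.
Qed.

End Oracles.

Theorem lemma6 (R : realFieldType) (n : nat) (hn : (0 < n)%N)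
  (phi_imp g : 'M[R]_n) :
  right_stochastic (proj_oracle phi_imp) /\
  (forall phi_star : 'M[R]_n, right_stochastic phi_star ->
     mx_inner g (proj_oracle phi_imp - phi_star)
       <= mx_inner (grad_oracle phi_imp g) (phi_imp - phi_star)).
Proof.
split; first by split=> [i j|i]; [exact: proj_oracle_ge0 | exact: proj_oracle_sum1].
move=> phi_star [star_ge0 star_sum1]; apply: ler_sum => i _.
have subE (A : 'M[R]_n) j : (A - phi_star) i j = A i j - phi_star i j.
  by rewrite !mxE.
under eq_bigr do rewrite subE.
under [X in _ <= X]eq_bigr do rewrite subE.
exact: row_oracle_le.
Qed.
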